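(* Let $Z=\{(x_i,y_i)\}_{i=1,\dots,N}$ be a finite sample with $x_i\in\mathcal{X}$ and $y_i\in\{-1,1\}$, and let $h^t,h^s:\mathcal{X}\to\{-1,1\}$ be two classifiers (teacher and student). Assume $R_Z(h^t)>0$ and $R^{h^t}_{acc(h^t)}(h^s)>0$. Then $$R_{Z}(h^s)\leq R_{Z}(h^t)\iff \frac{R_{err(h^t)}^{h^t}(h^s)}{R_{acc(h^t)}^{h^t}(h^s)}\geq \frac{1}{R_{Z}(h^t)}-1.$$
   Context: For a finite nonempty (multi)set $S$ of labelled pairs $(x,y)$ and functions $f,g:\mathcal{X}\to\{-1,1\}$, define the empirical disagreement risk $R^{f}_{S}(g):=\frac{1}{|S|}\sum_{(x,y)\in S}\mathbb{1}[f(x)\neq g(x)]$, and the empirical risk $R_S(g):=\frac{1}{|S|}\sum_{(x,y)\in S}\mathbb{1}[y\neq g(x)]$. Here $\mathbb{1}[\cdot]$ is $1$ if the condition holds and $0$ otherwise. The sets $acc(h^t):=\{(x,y)\in Z : h^t(x)=y\}$ and $err(h^t):=\{(x,y)\in Z : h^t(x)\neq y\}$ are the sub-multisets of $Z$ on which the teacher is correct, respectively wrong. *)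

From mathcomp Require Import all_boot all_order all_algebra.
Set Implicit Arguments. Unset Strict Implicit. Unset Printing Implicit Defensive.
Import Order.TTheory GRing.Theory Num.Theory.
Local Open Scope ring_scope.

(* A sample is a finite multiset of labelled pairs, represented as a list
   (multiplicities = repetitions).  Labels and classifier outputs are integers,
   constrained to {-1,1} by hypotheses in the theorem. *)
Definition is_label (y : int) : bool := (y == 1) || (y == -1).

Definition disagree_risk (R : realFieldType) (X : Type)
  (f g : X -> int) (S : seq (X * int)) : R :=
  (\sum_(p <- S) (f p.1 != g p.1)%:R) / (size S)%:R.

Definition emp_risk (R : realFieldType) (X : Type)
  (g : X -> int) (S : seq (X * int)) : R :=
  (\sum_(p <- S) (p.2 != g p.1)%:R) / (size S)%:R.

Definition acc (X : Type) (h : X -> int) (Z : seq (X * int)) :=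
  [seq p <- Z | h p.1 == p.2].
Definition err (X : Type) (h : X -> int) (Z : seq (X * int)) :=
  [seq p <- Z | h p.1 != p.2].

(** With labels in {-1, 1}, the student errs on a sample point exactly when
    it disagrees with the teacher xor the teacher errs. Counting, the number
    [s] of student mistakes satisfies [s + e = a + E], where [E] counts the
    teacher's mistakes and [a], [e] the disagreements on acc(h^t) and
    err(h^t). Both sides of the equivalence then reduce to [a <= e]:
    the left one directly, the right one after clearing the positive
    denominators, since 1 / R_Z(h^t) - 1 = |acc(h^t)| / |err(h^t)|. *)
From mathcomp Require Import all_boot all_order all_algebra.
From mathcomp Require Import zify ring lra.
Import Order.TTheory GRing.Theory Num.Theory.
Local Open Scope ring_scope.

Lemma is_label_neq_xor {y t s : int} :
  is_label y -> is_label t -> is_label s -> (y != s) = (t != s) (+) (t != y).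
Proof. by rewrite /is_label => /orP[]/eqP-> /orP[]/eqP-> /orP[]/eqP->. Qed.

Lemma sumr_bool_count (R : pzSemiRingType) (T : Type) (P : pred T) (s : seq T) :
  \sum_(p <- s) (P p)%:R = (count P s)%:R :> R.
Proof.
rewrite -sum1_count natr_sum [RHS]big_mkcond /=.
by apply: eq_bigr => p _; case: (P p).
Qed.

Section Sample.

Context {X : Type} (ht hs : X -> int).

Definition disagrees (p : X * int) : bool := ht p.1 != hs p.1.

Lemma disagree_riskE (R : realFieldType) (S : seq (X * int)) :
  disagree_risk R ht hs S = (count disagrees S)%:R / (size S)%:R.
Proof. by rewrite /disagree_risk sumr_bool_count. Qed.

Lemma emp_riskE (R : realFieldType) (g : X -> int) (S : seq (X * int)) :
  emp_risk R g S = (count (fun p => p.2 != g p.1) S)%:R / (size S)%:R.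
Proof. by rewrite /emp_risk sumr_bool_count. Qed.

Lemma size_acc_err (Z : seq (X * int)) :
  size Z = (size (acc ht Z) + size (err ht Z))%N.
Proof. by rewrite !size_filter count_predC. Qed.

Lemma emp_risk_teacher (R : realFieldType) (Z : seq (X * int)) :
  emp_risk R ht Z = (size (err ht Z))%:R / (size (acc ht Z) + size (err ht Z))%:R.
Proof.
rewrite emp_riskE -size_acc_err size_filter.
by congr (_%:R / _); apply: eq_count => p; rewrite /= eq_sym.
Qed.

Lemma count_student_errors (Z : seq (X * int)) :
  all (fun p => is_label p.2) Z -> (forall x, is_label (ht x)) ->
  (forall x, is_label (hs x)) ->
  (count (fun p => p.2 != hs p.1) Z + count disagrees (err ht Z) =
   count disagrees (acc ht Z) + size (err ht Z))%N.
Proof.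
move=> + hht hhs; elim: Z => //= p Z IH /andP[hp /IH {}IH].
move: IH; rewrite (is_label_neq_xor hp (hht p.1) (hhs p.1)) /disagrees.
by case: (ht p.1 == p.2) => /=; case: (ht p.1 != hs p.1) => /=; lia.
Qed.

End Sample.

Lemma natr_div_gt0 {R : realFieldType} {m n : nat} :
  0 < m%:R / n%:R :> R -> (0 < m)%N /\ (0 < n)%N.
Proof. by case: m n => [|m] [|n]; rewrite ?mul0r ?invr0 ?mulr0 ?ltxx. Qed.

Lemma risk_comparison (R : realFieldType) (A E a e s : R) :
  0 < A -> 0 < E -> 0 < a -> s + e = a + E ->
  s / (A + E) <= E / (A + E) <-> 1 / (E / (A + E)) - 1 <= e / E / (a / A).
Proof.
move=> A_gt0 E_gt0 a_gt0 balance.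
have AE_gt0 : 0 < A + E by rewrite addr_gt0.
have -> : 1 / (E / (A + E)) - 1 = A / E by field; rewrite ?gt_eqF.
have -> : e / E / (a / A) = e / a * (A / E) by field; rewrite ?gt_eqF.
rewrite ler_pM2r ?invr_gt0 // -{1}(mul1r (A / E)) ler_pM2r ?divr_gt0 //.
by rewrite ler_pdivlMr // mul1r; split=> ?; lra.
Qed.

Theorem theorem1 (R : realFieldType) (X : Type) (Z : seq (X * int))
  (ht hs : X -> int)
  (hZ : all (fun p => is_label p.2) Z)
  (hht : forall x, is_label (ht x))
  (hhs : forall x, is_label (hs x))
  (hpos1 : 0 < emp_risk R ht Z)
  (hpos2 : 0 < disagree_risk R ht hs (acc ht Z)) :
  emp_risk R hs Z <= emp_risk R ht Z <->
  disagree_risk R ht hs (err ht Z) / disagree_risk R ht hs (acc ht Z)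
    >= 1 / emp_risk R ht Z - 1.
Proof.
rewrite emp_risk_teacher in hpos1 *; rewrite disagree_riskE in hpos2.
have [E_gt0 _] := natr_div_gt0 hpos1.
have [a_gt0 A_gt0] := natr_div_gt0 hpos2.
rewrite emp_riskE !disagree_riskE (size_acc_err ht) natrD.
apply: risk_comparison; rewrite ?ltr0n //.
by rewrite -!natrD count_student_errors.
Qed.
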